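(* For every natural number $k$, the set $\mathbb{R}^+$ of positive real numbers can be written as the union of $k$ pairwise disjoint nonempty subsets, each of which is closed under addition and multiplication. *)

From Stdlib Require Import Reals.
Open Scope R_scope.

Definition add_mul_closed (S : R -> Prop) : Prop :=
  forall x y : R, S x -> S y -> S (x + y) /\ S (x * y).

Definition semiring_partition_of_pos (k : nat) (A : nat -> R -> Prop) : Prop :=
  (forall i, (i < k)%nat -> exists x, A i x) /\
  (forall i j x, (i < k)%nat -> (j < k)%nat -> A i x -> A j x -> i = j) /\
  (forall x, 0 < x <-> exists i, (i < k)%nat /\ A i x) /\
  (forall i, (i < k)%nat -> add_mul_closed (A i)).

From Stdlib Require Import Reals.
From mathcomp Require Import all_boot all_algebra.
From mathcomp Require Import boolp classical_sets cardinality reals Rstruct.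
From mathcomp Require Import ring lra zify.
From mathcomp Require finmap.
Import GRing.Theory Num.Theory order.Order.TTheory.

(* Let m = k - 1. Adjoining to Z, one after the other, reals t_0, ..., t_(m-1)
   each transcendental over the ring generated by the previous ones (they exist
   because R is uncountable), and extending by Zorn's lemma, we get derivations
   D_0, ..., D_(m-1) of R with D_j t_l = - [j == l] t_l; here a derivation on a
   subring extends to any element a: freely if a is transcendental, and with the
   value of D a forced by the minimal polynomial of a otherwise (characteristic 0).
   By the Leibniz rule, the vector (D_j x)_j of x + y, resp. x y, is a positive
   combination of those of x and y when x, y > 0. Hence any decomposition of R^m
   into convex cones induces a partition of the positive reals into sets closed
   under + and *. We use the lexicographic one: for i < m the vectors whose first
   nonzero coordinate is the i-th and is negative (containing t_i^2), and the
   lexicographically nonnegative vectors (containing 1). *)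

Set Implicit Arguments.
Unset Strict Implicit.
Unset Printing Implicit Defensive.

Local Open Scope ring_scope.
Local Open Scope classical_set_scope.

Section PartialDerivation.
Variable F : fieldType.
Implicit Types (S : set F) (G : set (F * F)) (p q : {poly F}).

Definition poly_over S p := forall i, S p`_i.

Definition adjoin S a := [set p.[a] | p in poly_over S].

Record derivation (D : F -> F) : Prop := Derivation {
  derivationD : forall x y, D (x + y) = D x + D y;
  derivationM : forall x y, D (x * y) = x * D y + y * D x }.

Lemma derivation1 D : derivation D -> D 1 = 0.
Proof.
move=> derD; have /eqP := derivationM derD 1 1.
by rewrite !mul1r eq_sym -subr_eq0 addrK => /eqP.
Qed.

Record partial_derivation G : Prop := PartialDerivation {
  pd_functional : forall {x y z}, G (x, y) -> G (x, z) -> y = z;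
  pd_one : G (1, 0);
  pd_add : forall {x a y b}, G (x, a) -> G (y, b) -> G (x + y, a + b);
  pd_opp : forall {x a}, G (x, a) -> G (- x, - a);
  pd_mul : forall {x a y b}, G (x, a) -> G (y, b) -> G (x * y, x * b + y * a) }.

Definition pdom G := [set x | exists y, G (x, y)].
(* [pder G x] is 0 when [x] is not in [pdom G]. *)
Definition pder G x := xget 0 [set y | G (x, y)].

Section Domain.
Variable G : set (F * F).
Hypothesis pdG : partial_derivation G.
Local Notation S := (pdom G).
Local Notation D := (pder G).

Lemma pderP x : S x -> G (x, D x).
Proof. exact: xgetPex. Qed.

Lemma pder_graph x y : G (x, y) -> D x = y.
Proof. by move=> Gxy; apply: (pd_functional pdG (pderP _) Gxy); exists y. Qed.

Lemma pd_zero : G (0, 0).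
Proof.
have := pd_add pdG (pd_one pdG) (pd_opp pdG (pd_one pdG)).
by rewrite subrr oppr0 addr0.
Qed.

Lemma pdom0 : S 0. Proof. by exists 0; exact: pd_zero. Qed.
Lemma pdom1 : S 1. Proof. by exists 0; exact: pd_one. Qed.

Lemma pdomD x y : S x -> S y -> S (x + y).
Proof. by move=> [a Ga] [b Gb]; exists (a + b); exact: pd_add. Qed.

Lemma pdomN x : S x -> S (- x).
Proof. by move=> [a Ga]; exists (- a); exact: pd_opp. Qed.

Lemma pdomM x y : S x -> S y -> S (x * y).
Proof. by move=> [a Ga] [b Gb]; eexists; exact: pd_mul Ga Gb. Qed.

Lemma pdomMn x n : S x -> S (x *+ n).
Proof.
move=> Sx; elim: n => [|n IHn]; rewrite ?mulr0n ?mulrS; [exact: pdom0 | exact: pdomD].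
Qed.

Lemma pder0 : D 0 = 0. Proof. exact: pder_graph pd_zero. Qed.
Lemma pder1 : D 1 = 0. Proof. exact: pder_graph (pd_one pdG). Qed.

Lemma pderD x y : S x -> S y -> D (x + y) = D x + D y.
Proof. by move=> Sx Sy; apply: pder_graph; exact: pd_add (pderP Sx) (pderP Sy). Qed.

Lemma pderN x : S x -> D (- x) = - D x.
Proof. by move=> Sx; apply: pder_graph; exact: pd_opp (pderP Sx). Qed.

Lemma pderM x y : S x -> S y -> D (x * y) = x * D y + y * D x.
Proof. by move=> Sx Sy; apply: pder_graph; exact: pd_mul (pderP Sx) (pderP Sy). Qed.

Lemma pder_sum n (f : nat -> F) : (forall i, (i < n)%N -> S (f i)) ->
  S (\sum_(i < n) f i) /\ D (\sum_(i < n) f i) = \sum_(i < n) D (f i).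
Proof.
elim: n => [|n IHn] Sf.
  by rewrite !big_ord0; split; [exact: pdom0 | exact: pder0].
have [Ssum Dsum] := IHn (fun i lt_in => Sf i (ltnW lt_in)).
rewrite !big_ord_recr /=; split; first exact: pdomD Ssum (Sf _ (ltnSn n)).
by rewrite (pderD Ssum (Sf _ (ltnSn n))) Dsum.
Qed.

Definition pder_poly p := map_poly D p.

Lemma coef_pder_poly p i : (pder_poly p)`_i = D p`_i.
Proof. by rewrite coef_map_id0 // pder0. Qed.

Lemma poly_overD p q : poly_over S p -> poly_over S q -> poly_over S (p + q).
Proof. by move=> Sp Sq i; rewrite coefD; exact: pdomD. Qed.

Lemma poly_overN p : poly_over S p -> poly_over S (- p).
Proof. by move=> Sp i; rewrite coefN; exact: pdomN. Qed.

Lemma poly_overB p q : poly_over S p -> poly_over S q -> poly_over S (p - q).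
Proof. by move=> Sp Sq; apply: poly_overD Sp (poly_overN Sq). Qed.

Lemma poly_overM p q : poly_over S p -> poly_over S q -> poly_over S (p * q).
Proof.
move=> Sp Sq i; rewrite coefM.
by have [] := pder_sum (fun j (_ : (j < i.+1)%N) => pdomM (Sp j) (Sq (i - j)%N)).
Qed.

Lemma poly_overC c : S c -> poly_over S c%:P.
Proof. by move=> Sc i; rewrite coefC; case: (i == 0)%N => //; exact: pdom0. Qed.

Lemma poly_overXn n : poly_over S 'X^n.
Proof. by move=> i; rewrite coefXn; case: eqP => _; [exact: pdom1 | exact: pdom0]. Qed.

Lemma poly_overX : poly_over S 'X.
Proof. by move=> i; rewrite coefX; case: eqP => _; [exact: pdom1 | exact: pdom0]. Qed.

Lemma poly_over_deriv p : poly_over S p -> poly_over S p^`().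
Proof. by move=> Sp i; rewrite coef_deriv; exact: pdomMn. Qed.

Lemma pder_polyD p q : poly_over S p -> poly_over S q ->
  pder_poly (p + q) = pder_poly p + pder_poly q.
Proof. by move=> Sp Sq; apply/polyP => i; rewrite coefD !coef_pder_poly coefD pderD. Qed.

Lemma pder_polyN p : poly_over S p -> pder_poly (- p) = - pder_poly p.
Proof. by move=> Sp; apply/polyP => i; rewrite coefN !coef_pder_poly coefN pderN. Qed.

Lemma pder_polyM p q : poly_over S p -> poly_over S q ->
  pder_poly (p * q) = pder_poly p * q + p * pder_poly q.
Proof.
move=> Sp Sq; apply/polyP => i; rewrite coef_pder_poly coefD !coefM.
have [_ ->] := pder_sum (fun j (_ : (j < i.+1)%N) => pdomM (Sp j) (Sq (i - j)%N)).
rewrite -big_split; apply: eq_bigr => j _ /=.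
by rewrite pderM // !coef_pder_poly; ring.
Qed.

Lemma pder_polyC c : pder_poly c%:P = (D c)%:P.
Proof.
by apply/polyP => i; rewrite coef_pder_poly !coefC; case: (i == 0)%N; rewrite ?pder0.
Qed.

Lemma pder_polyX : pder_poly 'X = 0.
Proof.
apply/polyP => i; rewrite coef_pder_poly coefX coef0.
by case: (i == 1)%N; rewrite ?pder1 ?pder0.
Qed.

Section Extension.
Variables a u : F.

(* A derivation extending [D] to [adjoin S a] and sending [a] to [u] must map
   [p.[a]] to [ext_val p]; this is well defined iff [ext_compatible] holds. *)
Definition ext_val p := (pder_poly p).[a] + p^`().[a] * u.

Lemma ext_valD p q : poly_over S p -> poly_over S q ->
  ext_val (p + q) = ext_val p + ext_val q.
Proof. by move=> Sp Sq; rewrite /ext_val pder_polyD // derivD !hornerD; ring. Qed.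

Lemma ext_valN p : poly_over S p -> ext_val (- p) = - ext_val p.
Proof. by move=> Sp; rewrite /ext_val pder_polyN // derivN !hornerN; ring. Qed.

Lemma ext_valB p q : poly_over S p -> poly_over S q ->
  ext_val (p - q) = ext_val p - ext_val q.
Proof. by move=> Sp Sq; rewrite ext_valD ?ext_valN //; exact: poly_overN. Qed.

Lemma ext_valM p q : poly_over S p -> poly_over S q ->
  ext_val (p * q) = p.[a] * ext_val q + q.[a] * ext_val p.
Proof.
by move=> Sp Sq; rewrite /ext_val pder_polyM // derivM !hornerD !hornerM; ring.
Qed.

Lemma ext_valC c : ext_val c%:P = D c.
Proof. by rewrite /ext_val pder_polyC derivC hornerC horner0 mul0r addr0. Qed.

Lemma ext_valX : ext_val 'X = u.
Proof. by rewrite /ext_val pder_polyX derivX horner0 hornerC mul1r add0r. Qed.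

Definition pd_ext := [set (p.[a], ext_val p) | p in poly_over S].

Definition ext_compatible := forall p, poly_over S p -> p.[a] = 0 -> ext_val p = 0.

Lemma pd_ext_partial : ext_compatible -> partial_derivation pd_ext.
Proof.
move=> compat; split.
- move=> x y z [p Sp [<- <-]] [q Sq [pq <-]]; apply/eqP.
  rewrite -subr_eq0 -ext_valB //; apply/eqP/compat; first exact: poly_overB.
  by rewrite hornerD hornerN pq subrr.
- exists 1%:P; first exact: poly_overC pdom1.
  by rewrite hornerC ext_valC pder1.
- move=> _ _ _ _ [p Sp [<- <-]] [q Sq [<- <-]].
  by exists (p + q); [exact: poly_overD | rewrite hornerD ext_valD].
- move=> _ _ [p Sp [<- <-]].
  by exists (- p); [exact: poly_overN | rewrite hornerN ext_valN].
- move=> _ _ _ _ [p Sp [<- <-]] [q Sq [<- <-]].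
  by exists (p * q); [exact: poly_overM | rewrite hornerM ext_valM].
Qed.

Lemma sub_pd_ext : G `<=` pd_ext.
Proof.
move=> [x y] Gxy; exists x%:P; first by apply: poly_overC; exists y.
by rewrite hornerC ext_valC (pder_graph Gxy).
Qed.

Lemma pd_ext_at : pd_ext (a, u).
Proof. by exists 'X; [exact: poly_overX | rewrite hornerX ext_valX]. Qed.

Lemma pdom_ext : pdom pd_ext = adjoin S a.
Proof.
apply/seteqP; split => [x [y [p Sp [<- _]]]|_ [p Sp <-]]; first by exists p.
by exists (ext_val p); exists p.
Qed.

End Extension.

Lemma poly_over_reduce f g : poly_over S f -> poly_over S g -> f != 0 ->
    (size f <= size g)%N ->
  exists2 r, poly_over S r & (size ((lead_coef f)%:P * g - r * f)%R < size g)%N.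
Proof.
move=> Sf Sg f0 le_fg; set d := (size g - size f)%N.
exists ((lead_coef g)%:P * 'X^d).
  exact: poly_overM (poly_overC (Sg _)) (poly_overXn _).
have f_gt0 : (0 < size f)%N by rewrite size_poly_gt0.
have g_gt0 := leq_trans f_gt0 le_fg.
rewrite -[X in (_ < X)%N](prednK g_gt0) ltnS.
apply/leq_sizeP => j le_gj; rewrite coefB coefCM -mulrA coefCM coefXnM.
rewrite ifN; last by rewrite -leqNgt /d; lia.
have [lt_gj|lt_jg|eq_gj] := ltngtP (size g).-1 j.
- have le_g : (size g <= j)%N by rewrite -(prednK g_gt0).
  rewrite (nth_default _ le_g) (nth_default _ (_ : size f <= _)%N) //; last by lia.
  by rewrite !mulr0 subrr.
- by move: le_gj; rewrite leqNgt lt_jg.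
- by rewrite -eq_gj (_ : (_ - d)%N = (size f).-1) 1?mulrC ?subrr // /d; lia.
Qed.

Lemma ext_val0 a u : ext_val a u 0 = 0.
Proof. by rewrite -polyC0 ext_valC pder0. Qed.

Lemma ext_compatible_of_minimal a u f : poly_over S f -> f != 0 -> f.[a] = 0 ->
    (forall g, poly_over S g -> g.[a] = 0 -> (size g < size f)%N -> g = 0) ->
  ext_val a u f = 0 -> ext_compatible a u.
Proof.
move=> Sf f0 fa fmin Phif g; move: {2}(size g) (leqnn (size g)) => n.
elim: n g => [|n IHn] g le_gn Sg ga.
  by move: le_gn; rewrite leqn0 size_poly_eq0 => /eqP ->; exact: ext_val0.
have [lt_gf|le_fg] := ltnP (size g) (size f); first by rewrite (fmin g) ?ext_val0.
have [r Sr lt_hg] := poly_over_reduce Sf Sg f0 le_fg.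
have Sl := poly_overC (Sf (size f).-1).
have Sh := poly_overB (poly_overM Sl Sg) (poly_overM Sr Sf).
have := IHn _ (leq_trans lt_hg le_gn) Sh.
rewrite hornerD hornerN !hornerM ga fa !mulr0 subrr => /(_ erefl).
rewrite ext_valB ?ext_valM //; try exact: poly_overM.
rewrite ga fa Phif hornerC !mul0r mulr0 !addr0 subr0 => /eqP.
by rewrite mulf_eq0 lead_coef_eq0 (negbTE f0) => /eqP.
Qed.

Section Char0.
Hypothesis charF : [pchar F] =i pred0.

Lemma deriv_neq0 p : (1 < size p)%N -> p^`() != 0.
Proof.
move=> p_gt1; have nz_p : p != 0 by rewrite -size_poly_gt0; lia.
apply/eqP => /(congr1 (fun q : {poly F} => q`_(size p).-2)).
rewrite coef_deriv coef0 (_ : (size p).-2.+1 = (size p).-1); last by lia.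
move/eqP; rewrite -mulr_natr mulf_eq0 lead_coef_eq0 (negbTE nz_p) /=.
by rewrite ((pcharf0P F).1 charF) -subn1 subn_eq0 leqNgt p_gt1.
Qed.

Lemma ext_compatible_exists a : exists u, ext_compatible a u.
Proof.
have [[f0 [Sf0 nz_f0 f0a]]|no_ann] :=
  pselect (exists f, [/\ poly_over S f, f != 0 & f.[a] = 0]); last first.
  exists 0 => p Sp pa; case: (eqVneq p 0) => [->|p0]; first exact: ext_val0.
  by case: no_ann; exists p.
pose annihilator_size n :=
  `[< exists f, [/\ poly_over S f, f != 0, f.[a] = 0 & size f = n] >].
have : exists n, annihilator_size n by exists (size f0); apply/asboolP; exists f0.
case/ex_minnP => _ /asboolP [f [Sf nz_f fa <-]] min_f.
have fmin g : poly_over S g -> g.[a] = 0 -> (size g < size f)%N -> g = 0.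
  move=> Sg ga; apply: contraTeq => nz_g; rewrite -leqNgt.
  by apply: min_f; apply/asboolP; exists g.
have f_gt1 : (1 < size f)%N.
  rewrite ltnNge; apply/negP => /size1_polyC f_const.
  by move: nz_f fa; rewrite f_const hornerC polyC_eq0 => /eqP.
have f'a : f^`().[a] != 0.
  apply/eqP => f'a; move: (deriv_neq0 f_gt1).
  by rewrite (fmin _ (poly_over_deriv Sf) f'a (lt_size_deriv nz_f)) eqxx.
(* [a] is a simple root of its annihilator [f] of least degree. *)
exists (- (pder_poly f).[a] / f^`().[a]).
by apply: ext_compatible_of_minimal Sf nz_f fa fmin _; rewrite /ext_val; field.
Qed.

End Char0.

End Domain.

Lemma pd_bigcup (C : set (set (F * F))) : C `<=` partial_derivation ->
  total_on C subset -> C !=set0 -> partial_derivation (\bigcup_(X in C) X).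
Proof.
move=> Cpd Ctot [X0 CX0].
have common xy1 xy2 : (\bigcup_(X in C) X) xy1 -> (\bigcup_(X in C) X) xy2 ->
    exists2 X, C X & X xy1 /\ X xy2.
  move=> [X1 CX1 X1xy] [X2 CX2 X2xy].
  by have [/(_ _ X1xy)|/(_ _ X2xy)] := Ctot _ _ CX1 CX2; [exists X2 | exists X1].
split.
- move=> x y z Gy Gz; have [X CX [Xy Xz]] := common _ _ Gy Gz.
  exact: (pd_functional (Cpd _ CX) Xy Xz).
- by exists X0 => //; exact: pd_one (Cpd _ CX0).
- move=> x a y b Ga Gb; have [X CX [Xa Xb]] := common _ _ Ga Gb.
  by exists X => //; exact: (pd_add (Cpd _ CX) Xa Xb).
- by move=> x a [X CX Xa]; exists X => //; exact: (pd_opp (Cpd _ CX) Xa).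
- move=> x a y b Ga Gb; have [X CX [Xa Xb]] := common _ _ Ga Gb.
  by exists X => //; exact: (pd_mul (Cpd _ CX) Xa Xb).
Qed.

Section Maximal.
Hypothesis charF : [pchar F] =i pred0.

Lemma maximal_pd_total G : partial_derivation G ->
  (forall H, G `<` H -> ~ partial_derivation H) -> pdom G = setT.
Proof.
move=> pdG Gmax; apply/seteqP; split => // x _; apply: contrapT => Gx.
have [u compat] := ext_compatible_exists pdG charF x.
apply: (Gmax (pd_ext G x u)); last exact: pd_ext_partial.
split; first exact: sub_pd_ext.
by move=> sub; apply: Gx; exists u; apply: sub; exact: pd_ext_at.
Qed.

Lemma derivation_extension G : partial_derivation G ->
  exists D, derivation D /\ forall x y, G (x, y) -> D x = y.
Proof.
(* The [set0] alternative accounts for the union of the empty chain. *)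
move=> pdG; pose P H := H = set0 \/ partial_derivation H /\ G `<=` H.
have chainP C : C `<=` P -> total_on C subset -> P (\bigcup_(X in C) X).
  move=> CP Ctot; pose C' := [set X | C X /\ X !=set0].
  have C'P X : C' X -> partial_derivation X /\ G `<=` X.
    by move=> [/CP [->[]|]].
  have [[X0 C'X0]|C'0] := pselect (C' !=set0); last first.
    left; apply/seteqP; split => // xy [X CX Xxy].
    by apply: C'0; exists X; split => //; exists xy.
  have -> : \bigcup_(X in C) X = \bigcup_(X in C') X.
    apply/seteqP; split => [xy [X CX Xxy]|xy [X [CX _] Xxy]]; last by exists X.
    by exists X => //; split => //; exists xy.
  right; split.
    apply: pd_bigcup; [by move=> X /C'P [] | | by exists X0].
    by move=> X Y [CX _] [CY _]; exact: Ctot.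
  by move=> xy Gxy; exists X0 => //; apply: (C'P _ C'X0).2.
have [M [PM Mmax]] := Zorn_bigcup chainP.
have [pdM GM] : partial_derivation M /\ G `<=` M.
  case: PM => // M0; exfalso; apply: (Mmax G); last by right; split.
  by rewrite M0; split; [exact: sub0set | move/(_ (1, 0) (pd_one pdG))].
have Mtot : pdom M = setT.
  apply: maximal_pd_total => // H MH pdH; apply: (Mmax H MH); right.
  by split => //; apply: subset_trans GM (properW MH).
have SM x : pdom M x by rewrite Mtot.
exists (pder M); split; first by split=> x y; [exact: pderD | exact: pderM].
by move=> x y Gxy; exact: (pder_graph pdM (GM _ Gxy)).
Qed.

End Maximal.
End PartialDerivation.

Lemma finite_roots (F : idomainType) (p : {poly F}) : p != 0 ->
  finite_set [set x | root p x].
Proof.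
move=> p0; apply: contrapT => /(infinite_set_fset (size p)) [B rootsB size_pB].
move/eqP: p0; apply; apply: (roots_geq_poly_eq0 _ (finmap.fset_uniq B) size_pB).
by apply/allP => x /rootsB.
Qed.

Section Uncountable.
Variable R : realType.

Definition trisect (I : R * R) (y : R) : R * R :=
  if y <= (I.1 + I.2) / 2 then ((I.1 + 2 * I.2) / 3, I.2)
  else (I.1, (2 * I.1 + I.2) / 3).

Lemma trisectP I y : I.1 < I.2 -> let J := trisect I y in
  [/\ J.1 < J.2, I.1 <= J.1, J.2 <= I.2 & y < J.1 \/ J.2 < y].
Proof.
case: I => a b /= lt_ab; rewrite /trisect /=.
case: ifPn => [y_mid|] /=; first by split; [lra | lra | lra | left; lra].
by rewrite -ltNge => y_mid; split; [lra | lra | lra | right; lra].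
Qed.

Lemma exists_avoiding (e : nat -> R) : exists x, forall n, e n <> x.
Proof.
pose I := fix I n := if n is n.+1 then trisect (I n) (e n) else ((0 : R), (1 : R)).
have I_lt n : (I n).1 < (I n).2.
  by elim: n => [|n IHn] /=; [exact: ltr01 | case: (trisectP (e n) IHn)].
have I_nested n k : (n <= k)%N -> (I n).1 <= (I k).1 /\ (I k).2 <= (I n).2.
  move/subnK <-; elim: (k - n)%N => [|d [IH1 IH2]] /=; first by rewrite add0n.
  have [_ le1 le2 _] := trisectP (e (d + n)) (I_lt (d + n)).
  by split; [exact: le_trans IH1 le1 | exact: le_trans le2 IH2].
have I_cross n k : (I n).1 <= (I k).2.
  have [le_nk|le_kn] := leqP n k.
    by apply: le_trans (I_nested _ _ le_nk).1 (ltW (I_lt k)).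
  by apply: le_trans (ltW (I_lt n)) (I_nested _ _ (ltnW le_kn)).2.
pose lefts := [set (I n).1 | n in [set: nat]].
have ub_lefts k : ubound lefts (I k).2 by move=> _ [n _ <-]; exact: I_cross.
have sup_lefts : has_sup lefts by split; [exists (I 0).1, 0 | exists (I 0).2].
exists (sup lefts) => n en.
have le_left : (I n.+1).1 <= sup lefts by apply: sup_upper_bound => //; exists n.+1.
have le_right : sup lefts <= (I n.+1).2 by apply: ge_sup => //; exists (I 0).1, 0.
have [_ _ _] := trisectP (e n) (I_lt n).
by move: le_left le_right; rewrite /= -/(I n) en => ? ?; case; lra.
Qed.

Lemma realType_uncountable : ~ countable [set: R].
Proof.
move/countable_injP => [f injf]; pose e n := xget 0 [set x | f x = n].
have [x not_ex] := exists_avoiding e; apply: (not_ex (f x)).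
by apply: injf; rewrite ?in_setT //; exact: (@xgetI _ 0 [set y | f y = f x] x).
Qed.

End Uncountable.

Section Transcendental.
Variable R : realType.
Implicit Types (S : set R) (p : {poly R}).

Lemma countable_poly_over S : countable S -> countable (poly_over S).
Proof.
move/countable_injP => [f injf]; apply/countable_injP.
exists (fun p => pickle (map f p)) => p q /set_mem Sp /set_mem Sq.
move=> /(pcan_inj pickleK) fpq.
have size_pq : size p = size q by rewrite -(size_map f) fpq size_map.
apply/polyP => i; have [lt_ip|le_pi] := ltnP i (size p); last first.
  by rewrite !nth_default -?size_pq.
apply: injf; rewrite ?inE; [exact: Sp | exact: Sq |].
by rewrite -!(nth_map 0 0) -?size_pq // fpq.
Qed.

Definition transcendental S x := forall p, poly_over S p -> p.[x] = 0 -> p = 0.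

Lemma exists_transcendental S : countable S -> exists x, transcendental S x.
Proof.
move=> cS; pose nz_poly_over := poly_over S `&` [set p | p != 0].
have cA : countable (\bigcup_(p in nz_poly_over) [set x | root p x]).
  apply: bigcup_countable => [|p [_ p0]].
    exact: sub_countable (subset_card_le (@subIsetl _ _ _)) (countable_poly_over cS).
  exact/finite_set_countable/finite_roots.
have [x Ax] : exists x, ~ (\bigcup_(p in nz_poly_over) [set x | root p x]) x.
  apply: contrapT => all_alg; apply: realType_uncountable.
  apply: sub_countable cA; apply: subset_card_le => x _.
  by apply: contrapT => Ax; apply: all_alg; exists x.
exists x => p Sp px; apply/eqP; apply: contrapT => /negP p0.
by apply: Ax; exists p => //; exact/rootP.
Qed.

Lemma countable_adjoin S a : countable S -> countable (adjoin S a).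
Proof.
by move=> cS; apply: sub_countable (card_image_le _ _) (countable_poly_over cS).
Qed.

End Transcendental.

Section Tower.
Variable R : realType.

Definition integer_graph : set (R * R) := [set (z%:~R, 0) | z in [set: int]].

Lemma integer_graph_pd : partial_derivation integer_graph.
Proof.
split.
- by move=> x y z [z1 _ [_ <-]] [z2 _ [_ <-]].
- by exists 1.
- move=> _ _ _ _ [z1 _ [<- <-]] [z2 _ [<- <-]].
  by exists (z1 + z2); rewrite // intrD addr0.
- by move=> _ _ [z _ [<- <-]]; exists (- z); rewrite // intrN oppr0.
- move=> _ _ _ _ [z1 _ [<- <-]] [z2 _ [<- <-]].
  by exists (z1 * z2); rewrite // intrM !mulr0 addr0.
Qed.

Definition pick_transcendental (S : set R) := xget 0 (transcendental S).

(* [tower l] is the ring Z[t_0, ..., t_(l-1)] with [t_j = generator j]. *)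
Fixpoint tower l : set R :=
  if l is l.+1 then adjoin (tower l) (pick_transcendental (tower l))
  else pdom integer_graph.

Definition generator l := pick_transcendental (tower l).

Lemma countable_tower l : countable (tower l).
Proof.
elim: l => [|l IHl]; last exact: countable_adjoin.
apply: sub_countable (countableP [set: int]).
apply: card_le_trans (card_image_le (fun z : int => z%:~R : R) _).
by apply: subset_card_le => _ [_ [z _ [<- _]]]; exists z.
Qed.

Lemma generator_transcendental l : transcendental (tower l) (generator l).
Proof. exact: xgetPex (exists_transcendental (countable_tower l)). Qed.

Lemma tower_pd (u : nat -> R) l : exists G, [/\ partial_derivation G,
  pdom G = tower l & forall j, (j < l)%N -> G (generator j, u j)].
Proof.
elim: l => [|l [G [pdG domG Gu]]].
  by exists integer_graph; split => //; exact: integer_graph_pd.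
have compat : ext_compatible G (generator l) (u l).
  move=> p; rewrite domG => Sp pl.
  by rewrite (generator_transcendental Sp pl) ext_val0.
exists (pd_ext G (generator l) (u l)); split.
- exact: pd_ext_partial.
- by rewrite pdom_ext domG.
- move=> j; rewrite ltnS leq_eqVlt => /orP [/eqP -> | lt_jl]; first exact: pd_ext_at.
  exact/sub_pd_ext/Gu.
Qed.

Lemma derivation_on_generators (u : nat -> R) m :
  exists D, derivation D /\ forall j, (j < m)%N -> D (generator j) = u j.
Proof.
have [G [pdG _ Gu]] := tower_pd u m.
have [D [derD DG]] := derivation_extension (pchar_num R) pdG.
by exists D; split => // j lt_jm; exact/DG/Gu.
Qed.

Lemma generator_neq0 l : generator l != 0.
Proof.
have [G [pdG domG _]] := tower_pd (fun=> 0) l.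
have SX : poly_over (tower l) 'X by rewrite -domG; exact: poly_overX.
apply/eqP => gen0; have := generator_transcendental SX.
by rewrite hornerX gen0 => /(_ erefl) /eqP; rewrite polyX_eq0.
Qed.

End Tower.

Section LexClasses.
Variable R : realFieldType.
Implicit Types (v w : nat -> R) (a b x y : R).

Definition lead_neg v i := (forall j, (j < i)%N -> v j = 0) /\ v i < 0.

(* For [i >= m] this is the class of the lexicographically nonnegative vectors. *)
Definition lex_class m i v :=
  if (i < m)%N then lead_neg v i else forall j, (j < m)%N -> ~ lead_neg v j.

Lemma lead_neg_uniq v i j : lead_neg v i -> lead_neg v j -> i = j.
Proof.
move=> [vi0 vi] [vj0 vj]; have [lt_ij|lt_ji|//] := ltngtP i j.
- by move: vi; rewrite vj0 // ltxx.
- by move: vj; rewrite vi0 // ltxx.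
Qed.

Lemma lead_neg_comb a b v w i : 0 < a -> 0 < b ->
  lead_neg v i -> lead_neg w i -> lead_neg (fun j => a * v j + b * w j) i.
Proof.
move=> a0 b0 [v0 vi] [w0 wi].
split; first by move=> j lt_ji; rewrite v0 ?w0 // !mulr0 addr0.
by rewrite -oppr_gt0 opprD -!mulrN addr_gt0 // mulr_gt0 // oppr_gt0.
Qed.

Lemma lead_neg_comb_inv a b v w j : 0 < a -> 0 < b ->
  lead_neg (fun i => a * v i + b * w i) j ->
  exists2 i, (i <= j)%N & lead_neg v i \/ lead_neg w i.
Proof.
move=> a0 b0 [c0 cj]; pose P i := (i <= j)%N && ((v i != 0) || (w i != 0)).
have : exists i, P i.
  exists j; rewrite /P leqnn; apply: contraTT cj.
  by move=> /norP [/negPn/eqP -> /negPn/eqP ->]; rewrite !mulr0 addr0 ltxx.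
case/ex_minnP => i /andP [le_ij vwi] imin.
have below k : (k < i)%N -> v k = 0 /\ w k = 0.
  move=> lt_ki; have : ~~ P k by apply: contraTN lt_ki => /imin; rewrite -leqNgt.
  rewrite /P (leq_trans (ltnW lt_ki) le_ij) negb_or.
  by move=> /andP [/negPn/eqP -> /negPn/eqP ->].
have ci : a * v i + b * w i <= 0.
  by move: le_ij; rewrite leq_eqVlt => /orP [/eqP -> | /c0 ->]; [exact: ltW | ].
exists i => //; have [vi|vi] := ltP (v i) 0; first by left; split => // k /below [].
have [wi|wi] := ltP (w i) 0; first by right; split => // k /below [].
have av : 0 <= a * v i by exact: mulr_ge0 (ltW a0) vi.
have bw : 0 <= b * w i by exact: mulr_ge0 (ltW b0) wi.
have /eqP : b * w i = 0 by lra.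
have /eqP : a * v i = 0 by lra.
rewrite !mulf_eq0 (gt_eqF a0) (gt_eqF b0) /= => /eqP vi0 /eqP wi0.
by move: vwi; rewrite vi0 wi0 eqxx.
Qed.

Lemma lex_class_comb m i a b v w : 0 < a -> 0 < b ->
  lex_class m i v -> lex_class m i w -> lex_class m i (fun j => a * v j + b * w j).
Proof.
rewrite /lex_class; case: ifP => _ a0 b0 cv cw; first exact: lead_neg_comb.
move=> j lt_jm /(lead_neg_comb_inv a0 b0) [k le_kj [/cv|/cw]]; apply;
  exact: leq_ltn_trans le_kj lt_jm.
Qed.

Lemma lex_class_uniq m i j v : (i <= m)%N -> (j <= m)%N ->
  lex_class m i v -> lex_class m j v -> i = j.
Proof.
rewrite /lex_class.
case: ltnP => [lt_im|le_mi] le_im; case: ltnP => [lt_jm|le_mj] le_jm.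
- exact: lead_neg_uniq.
- by move=> ci /(_ i lt_im).
- by move=> /(_ j lt_jm) + cj.
- move=> _ _; apply/eqP.
  by rewrite eqn_leq (leq_trans le_im le_mj) (leq_trans le_jm le_mi).
Qed.

Lemma lex_class_exists m v : exists2 i, (i <= m)%N & lex_class m i v.
Proof.
have [[i lt_im neg_i]|none] := pselect (exists2 i, (i < m)%N & lead_neg v i).
  by exists i; [exact: ltnW | rewrite /lex_class lt_im].
by exists m => //; rewrite /lex_class ltnn => j lt_jm neg_j; apply: none; exists j.
Qed.

Variable D : nat -> R -> R.
Hypothesis derD : forall j, derivation (D j).

Lemma lex_class_derivationD m i x y : lex_class m i (fun j => D j x) ->
  lex_class m i (fun j => D j y) -> lex_class m i (fun j => D j (x + y)).
Proof.
move=> cx cy.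
have -> : (fun j => D j (x + y)) = (fun j => 1 * D j x + 1 * D j y).
  by apply: funext => j; rewrite !mul1r (derivationD (derD j)).
exact: lex_class_comb ltr01 ltr01 cx cy.
Qed.

Lemma lex_class_derivationM m i x y : 0 < x -> 0 < y ->
    lex_class m i (fun j => D j x) -> lex_class m i (fun j => D j y) ->
  lex_class m i (fun j => D j (x * y)).
Proof.
move=> x0 y0 cx cy.
have -> : (fun j => D j (x * y)) = (fun j => y * D j x + x * D j y).
  by apply: funext => j; rewrite (derivationM (derD j)) addrC.
exact: lex_class_comb y0 x0 cx cy.
Qed.

End LexClasses.

Lemma lex_class_partition m (D : nat -> R -> R) : (forall j, derivation (D j)) ->
    (forall i, (i < m)%N -> exists2 x, 0 < x & lead_neg (fun j => D j x) i) ->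
  semiring_partition_of_pos m.+1
    (fun i x => 0 < x /\ lex_class m i (fun j => D j x)).
Proof.
move=> derD witness; split; [|split; [|split]].
- move=> i /ssrnat.ltP; rewrite ltnS leq_eqVlt => /orP [/eqP ->|lt_im].
    exists 1; split; first exact: ltr01.
    by rewrite /lex_class ltnn => j _ [_]; rewrite derivation1 ?ltxx.
  by have [x x0 neg_x] := witness i lt_im; exists x; rewrite /lex_class lt_im.
- move=> i j x /ssrnat.ltP lt_ik /ssrnat.ltP lt_jk [_ ci] [_ cj].
  exact: lex_class_uniq ci cj.
- move=> x; split => [/RltP x0|[i [_ [x0 _]]]]; last exact/RltP.
  have [i le_im ci] := lex_class_exists m (fun j => D j x).
  by exists i; split; [exact/ssrnat.ltP | ].
- move=> i _ x y [x0 cx] [y0 cy]; split; split.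
  + exact: addr_gt0.
  + exact: lex_class_derivationD.
  + exact: mulr_gt0.
  + exact: lex_class_derivationM.
Qed.

Theorem theorem1p1 : forall k : nat, (1 <= k)%coq_nat ->
  exists A : nat -> R -> Prop, semiring_partition_of_pos k A.
Proof.
case=> [/ssrnat.leP //|m _]; pose t := generator R.
have [D derD] :=
  choice (fun j => derivation_on_generators (fun l => if j == l then - t l else 0) m).
exists (fun i x => 0 < x /\ lex_class m i (fun j => D j x)).
apply: lex_class_partition => [j|i lt_im]; first by case: (derD j).
have t2_gt0 : 0 < t i * t i by rewrite -expr2 exprn_even_gt0 ?generator_neq0.
exists (t i * t i) => //; split => [j lt_ji|].
  rewrite (derivationM (derD j).1) (derD j).2 ?(ltn_trans lt_ji) //.
  by rewrite ltn_eqF // mulr0 addr0.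
by rewrite (derivationM (derD i).1) (derD i).2 // eqxx; nra.
Qed.
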